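(* Let $X_n$ be the final altitude of a uniformly random Dyck meander with catastrophes of length $n$. Then $X_n$ admits a geometric limit distribution: $\Pr(X_n=k)\sim(1-\lambda)\lambda^k$, where $\lambda=v_1(\rho_0)^{-1}\approx0.6823278$ is the unique real positive root of $\lambda^3+\lambda-1$, namely $\lambda=\frac16\big(108+12\sqrt{93}\big)^{1/3}-2\big(108+12\sqrt{93}\big)^{-1/3}$.
   Context: Dyck paths with catastrophes: paths starting at altitude $0$, never going below $0$, with steps $+1$, $-1$, and catastrophes (a step from an altitude $h\ge2$ directly to altitude $0$); meanders may end at any altitude; length = number of steps; the final altitude is the altitude of the endpoint. Here $v_1(z)=\frac{1+\sqrt{1-4z^2}}{2z}$ is the large root of $1-z(u^{-1}+u)=0$, and $\rho_0\approx0.46557$ is the unique positive root of $\rho_0^3+2\rho_0^2+\rho_0-1$. *)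

From Stdlib Require Import Reals List Arith.
From Coquelicot Require Import Coquelicot.
Import ListNotations.
Open Scope R_scope.

Inductive step := Up | Down | Cat.

Fixpoint run (h : nat) (s : list step) : option nat :=
  match s with
  | nil => Some h
  | Up :: t => run (S h) t
  | Down :: t => match h with O => None | S h' => run h' t end
  | Cat :: t => if Nat.leb 2 h then run O t else None
  end.

Fixpoint words (n : nat) : list (list step) :=
  match n with
  | O => [nil]
  | S m => flat_map (fun w => [Up :: w; Down :: w; Cat :: w]) (words m)
  end.

Definition meander_total (n : nat) : nat :=
  length (filter (fun w => match run 0 w with Some _ => true | None => false end)
                 (words n)).

Definition meander_count (n k : nat) : nat :=
  length (filter (fun w => match run 0 w with Some j => Nat.eqb j k | None => false end)
                 (words n)).

Definition prob_final (n k : nat) : R := INR (meander_count n k) / INR (meander_total n).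

Definition v1 (z : R) : R := (1 + sqrt (1 - 4 * z ^ 2)) / (2 * z).

From Stdlib Require Import Reals Lra Lia List PeanoNat FunctionalExtensionality.
From Coquelicot Require Import Coquelicot.
Import ListNotations.
Open Scope R_scope.

(* Counting meanders by final altitude amounts to iterating the transfer
   operator (T f)(h) = f(h+1) + [h >= 1] f(h-1) + [h >= 2] f(0) on the
   indicator of the target altitude and evaluating at 0.  T has the positive
   eigenfunction ell(0) = 1, ell(h) = lam^-5 (1 - lam^h) with eigenvalue
   beta = lam^-2 = lam + 1/lam, and since every altitude can reach 0 in two
   steps, T^2 / beta^2 satisfies a Doeblin minorization relative to ell; hence
   T^n g (0) / beta^n converges for every g between two multiples of ell.  The
   limits c_k for the indicators of k satisfy c_(k+1) = (c_k + c_(k+2)) / beta,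
   so being bounded they are geometric, c_k = c_0 lam^k, and the boundary
   relation c_0 = (C - c_0) / beta, with C the limit for g = 1, gives
   c_0 = (1 - lam) C. *)

Definition lam : R :=
  / 6 * Rpower (108 + 12 * sqrt 93) (/ 3) - 2 * / Rpower (108 + 12 * sqrt 93) (/ 3).

Lemma Rpower_inv3_cube x : 0 < x -> Rpower x (/ 3) ^ 3 = x.
Proof.
  intro Hx. rewrite <- Rpower_pow by apply exp_pos.
  rewrite Rpower_mult. replace (/ 3 * INR 3) with 1 by (simpl; field).
  exact (Rpower_1 x Hx).
Qed.

Lemma lam_root : lam ^ 3 + lam - 1 = 0.
Proof.
  assert (Hsq : sqrt 93 ^ 2 = 93) by (apply pow2_sqrt; lra).
  assert (Hcube : Rpower (108 + 12 * sqrt 93) (/ 3) ^ 3 = 108 + 12 * sqrt 93).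
  { apply Rpower_inv3_cube. pose proof (sqrt_pos 93). lra. }
  assert (Hpos : 0 < Rpower (108 + 12 * sqrt 93) (/ 3)) by apply exp_pos.
  unfold lam. set (t := Rpower _ _) in *.
  field_simplify_eq; [| lra].
  replace (t ^ 6) with ((t ^ 3) ^ 2) by ring. rewrite Hcube.
  ring_simplify. rewrite Hsq. ring.
Qed.

Lemma lam_pos : 0 < lam.
Proof. pose proof lam_root. nra. Qed.

Lemma lam_lt_1 : lam < 1.
Proof. pose proof lam_root. pose proof lam_pos. nra. Qed.

Lemma lam_root_unique x : 0 < x -> x ^ 3 + x - 1 = 0 -> x = lam.
Proof.
  intros Hx Hroot. pose proof lam_root. pose proof lam_pos.
  assert (Hfactor : (x - lam) * (x ^ 2 + x * lam + lam ^ 2 + 1) = 0) by nra.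
  apply Rmult_integral in Hfactor as [|]; nra.
Qed.

Lemma v1_ge_1 z : 0 < z -> 2 * z <= 1 -> 1 <= v1 z.
Proof.
  intros Hz Hz2. unfold v1. pose proof (sqrt_pos (1 - 4 * z ^ 2)).
  apply (Rmult_le_reg_r (2 * z)); [lra|]. unfold Rdiv. rewrite Rmult_assoc, Rinv_l; lra.
Qed.

Lemma v1_kernel_root z : 0 < z -> 2 * z <= 1 -> z * (/ v1 z + v1 z) = 1.
Proof.
  intros Hz Hz2. unfold v1.
  assert (Hsq : sqrt (1 - 4 * z ^ 2) ^ 2 = 1 - 4 * z ^ 2) by (apply pow2_sqrt; nra).
  pose proof (sqrt_pos (1 - 4 * z ^ 2)).
  field_simplify_eq; [rewrite Hsq; ring | split; lra].
Qed.

(* [u = / v1 r] solves the kernel equation [r (u + 1/u) = 1]; substituting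
   [r = u / (1 + u^2)] turns the cubic for [rho0] into
   [(u^3 + u - 1) (u^3 - u^2 - 1) = 0], whose second factor is negative on (0, 1]. *)
Lemma lam_eq_inv_v1 r : 0 < r -> r ^ 3 + 2 * r ^ 2 + r - 1 = 0 -> lam = / v1 r.
Proof.
  intros Hr Hroot.
  assert (Hr2 : 2 * r <= 1) by nra.
  pose proof (v1_ge_1 r Hr Hr2) as Hv1.
  pose proof (v1_kernel_root r Hr Hr2) as Hkernel.
  set (u := / v1 r).
  assert (Hu : 0 < u <= 1).
  { unfold u. split; [apply Rinv_0_lt_compat; lra|].
    rewrite <- Rinv_1. apply Rinv_le_contravar; lra. }
  assert (Hru : r * (1 + u ^ 2) = u).
  { replace (v1 r) with (/ u) in Hkernel by (unfold u; field; lra).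
    rewrite Rinv_inv in Hkernel.
    transitivity (u * (r * (u + / u))); [field; lra|]. rewrite Hkernel. ring. }
  assert (Hfactor : (u ^ 3 + u - 1) * (u ^ 3 - u ^ 2 - 1) = 0).
  { assert (Hsubst : (1 + u ^ 2) ^ 3 * (r ^ 3 + 2 * r ^ 2 + r - 1)
      = (r * (1 + u ^ 2)) ^ 3 + 2 * (r * (1 + u ^ 2)) ^ 2 * (1 + u ^ 2)
        + r * (1 + u ^ 2) * (1 + u ^ 2) ^ 2 - (1 + u ^ 2) ^ 3) by ring.
    rewrite Hru, Hroot in Hsubst. lra. }
  apply Rmult_integral in Hfactor as [Hlam | Hother].
  - symmetry. apply lam_root_unique; lra.
  - nra.
Qed.

Record doeblin_operator {X : Type} (T : (X -> R) -> X -> R) (ell : X -> R)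
    (x0 : X) (alpha : R) : Prop := {
  doeblin_linear : forall a b f g x,
    T (fun y => a * f y + b * g y) x = a * T f x + b * T g x;
  doeblin_nonneg : forall f, (forall x, 0 <= f x) -> forall x, 0 <= T f x;
  doeblin_eigen : T ell = ell;
  doeblin_normalized : ell x0 = 1;
  doeblin_constant : 0 < alpha <= 1;
  doeblin_minorization : forall e, (forall x, 0 <= e x) ->
    forall x, alpha * e x0 * ell x <= T (T e) x
}.

Definition ell_bounded {X : Type} (ell : X -> R) (m M : R) (f : X -> R) : Prop :=
  forall x, m * ell x <= f x <= M * ell x.

Definition iter_limit {X : Type} (T : (X -> R) -> X -> R) (x0 : X) (g : X -> R) : R :=
  real (Lim_seq (fun n => Nat.iter n T g x0)).

Section DoeblinContraction.

Context {X : Type} {T : (X -> R) -> X -> R} {ell : X -> R} {x0 : X} {alpha : R}.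
Hypothesis HT : doeblin_operator T ell x0 alpha.

Let T_linear := doeblin_linear _ _ _ _ HT.
Let T_nonneg := doeblin_nonneg _ _ _ _ HT.
Let T_ell := doeblin_eigen _ _ _ _ HT.
Let ell_x0 := doeblin_normalized _ _ _ _ HT.
Let alpha_range := doeblin_constant _ _ _ _ HT.
Let T2_minorization := doeblin_minorization _ _ _ _ HT.

Lemma T_monotone f g : (forall x, f x <= g x) -> forall x, T f x <= T g x.
Proof.
  intros Hfg x.
  assert (Hdiff : 0 <= T (fun y => 1 * g y + (-1) * f y) x).
  { apply T_nonneg. intro y. specialize (Hfg y). lra. }
  rewrite T_linear in Hdiff. lra.
Qed.

Lemma iter_linear n : forall a b f g x,
  Nat.iter n T (fun y => a * f y + b * g y) x = a * Nat.iter n T f x + b * Nat.iter n T g x.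
Proof.
  induction n as [|n IH]; intros a b f g x; [reflexivity|].
  rewrite !Nat.iter_succ, (functional_extensionality _ _ (IH a b f g)).
  apply T_linear.
Qed.

Lemma iter_monotone n f g : (forall x, f x <= g x) ->
  forall x, Nat.iter n T f x <= Nat.iter n T g x.
Proof.
  intro Hfg. induction n as [|n IH]; [exact Hfg|].
  rewrite !Nat.iter_succ. apply T_monotone, IH.
Qed.

Lemma iter_ell n : Nat.iter n T ell = ell.
Proof. induction n as [|n IH]; [reflexivity|]. rewrite Nat.iter_succ, IH. exact T_ell. Qed.

Lemma T_ell_bounded m M f : ell_bounded ell m M f -> ell_bounded ell m M (T f).
Proof.
  intros Hf x.
  assert (Hscale : forall c, T (fun y => c * ell y + 0 * ell y) x = c * ell x).
  { intro c. rewrite T_linear, T_ell. ring. }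
  rewrite <- (Hscale m), <- (Hscale M).
  split; apply T_monotone; intro y; specialize (Hf y); lra.
Qed.

Lemma iter_ell_bounded n m M f : ell_bounded ell m M f -> ell_bounded ell m M (Nat.iter n T f).
Proof.
  intro Hf. induction n as [|n IH]; [exact Hf|].
  rewrite Nat.iter_succ. apply T_ell_bounded, IH.
Qed.

(* Applying the minorization to [f - m ell] and [M ell - f] pulls both bounds
   towards the value [f x0]. *)
Lemma T2_contraction m M f : ell_bounded ell m M f ->
  ell_bounded ell (m + alpha * (f x0 - m)) (M - alpha * (M - f x0)) (T (T f)).
Proof.
  intros Hf x.
  assert (HT2 : forall a b g, T (T (fun y => a * g y + b * ell y)) x
                              = a * T (T g) x + b * ell x).
  { intros a b g. change (T (T ?h) x) with (Nat.iter 2 T h x).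
    rewrite iter_linear, iter_ell. reflexivity. }
  pose proof (T2_minorization (fun y => 1 * f y + (- m) * ell y)) as Hlow.
  pose proof (T2_minorization (fun y => (-1) * f y + M * ell y)) as Hup.
  specialize (Hlow ltac:(intro y; specialize (Hf y); lra) x).
  specialize (Hup ltac:(intro y; specialize (Hf y); lra) x).
  rewrite HT2, ell_x0 in Hlow, Hup.
  split; lra.
Qed.

Lemma iter_oscillation j : forall m M g, ell_bounded ell m M g ->
  exists m' M', M' - m' <= (1 - alpha) ^ j * (M - m) /\
    forall n, (2 * j <= n)%nat -> ell_bounded ell m' M' (Nat.iter n T g).
Proof.
  induction j as [|j IH]; intros m M g Hg.
  - exists m, M. split; [simpl; lra|]. intros n _. apply iter_ell_bounded, Hg.
  - destruct (IH _ _ _ (T2_contraction m M g Hg)) as [m' [M' [Hwidth Hbounded]]].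
    exists m', M'. split.
    + replace ((1 - alpha) ^ S j * (M - m)) with ((1 - alpha) ^ j
        * ((M - alpha * (M - g x0)) - (m + alpha * (g x0 - m)))) by (simpl; ring).
      exact Hwidth.
    + intros [|[|n]] Hn; try lia.
      rewrite !Nat.iter_succ_r. apply Hbounded. lia.
Qed.

Lemma iter_cvg m M g : ell_bounded ell m M g ->
  ex_finite_lim_seq (fun n => Nat.iter n T g x0).
Proof.
  intro Hg. apply ex_lim_seq_cauchy_corr. intro eps.
  pose proof (cond_pos eps) as Heps.
  assert (HmM : m <= M) by (specialize (Hg x0); rewrite ell_x0 in Hg; lra).
  destruct (pow_lt_1_zero (1 - alpha) ltac:(rewrite Rabs_right; lra)
              (eps / (M - m + 1)) ltac:(apply Rdiv_lt_0_compat; lra)) as [j Hj].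
  specialize (Hj j (Nat.le_refl j)).
  rewrite Rabs_right in Hj by (apply Rle_ge, pow_le; lra).
  assert (Hsmall : (1 - alpha) ^ j * (M - m) < eps).
  { apply (Rmult_lt_compat_r (M - m + 1)) in Hj; [|lra].
    unfold Rdiv in Hj. rewrite Rmult_assoc, Rinv_l in Hj by lra.
    pose proof (pow_le (1 - alpha) j ltac:(lra)). nra. }
  destruct (iter_oscillation j m M g Hg) as [m' [M' [Hwidth Hbounded]]].
  exists (2 * j)%nat. intros n p Hn Hp.
  pose proof (Hbounded n Hn x0) as Hnx0. pose proof (Hbounded p Hp x0) as Hpx0.
  rewrite ell_x0 in Hnx0, Hpx0.
  apply Rabs_def1; lra.
Qed.

Lemma iter_limit_correct m M g : ell_bounded ell m M g ->
  is_lim_seq (fun n => Nat.iter n T g x0) (iter_limit T x0 g).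
Proof. intro Hg. exact (Lim_seq_correct' _ (iter_cvg m M g Hg)). Qed.

Lemma iter_limit_unique g (l : R) :
  is_lim_seq (fun n => Nat.iter n T g x0) l -> iter_limit T x0 g = l.
Proof. intro Hl. unfold iter_limit. rewrite (is_lim_seq_unique _ _ Hl). reflexivity. Qed.

Lemma iter_limit_T m M g : ell_bounded ell m M g -> iter_limit T x0 (T g) = iter_limit T x0 g.
Proof.
  intro Hg. apply iter_limit_unique.
  apply (is_lim_seq_ext (fun n => Nat.iter (S n) T g x0)).
  - intro n. rewrite Nat.iter_succ_r. reflexivity.
  - apply (is_lim_seq_incr_1 (fun n => Nat.iter n T g x0)).
    exact (iter_limit_correct m M g Hg).
Qed.

Lemma iter_limit_linear a b mf Mf mg Mg f g :
  ell_bounded ell mf Mf f -> ell_bounded ell mg Mg g ->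
  iter_limit T x0 (fun y => a * f y + b * g y)
  = a * iter_limit T x0 f + b * iter_limit T x0 g.
Proof.
  intros Hf Hg. apply iter_limit_unique.
  apply (is_lim_seq_ext (fun n => a * Nat.iter n T f x0 + b * Nat.iter n T g x0)).
  - intro n. symmetry. apply iter_linear.
  - apply is_lim_seq_plus'.
    + exact (is_lim_seq_scal_l _ a _ (iter_limit_correct _ _ f Hf)).
    + exact (is_lim_seq_scal_l _ b _ (iter_limit_correct _ _ g Hg)).
Qed.

Lemma iter_limit_le mf Mf mg Mg f g :
  ell_bounded ell mf Mf f -> ell_bounded ell mg Mg g -> (forall x, f x <= g x) ->
  iter_limit T x0 f <= iter_limit T x0 g.
Proof.
  intros Hf Hg Hfg. change (Rbar_le (iter_limit T x0 f) (iter_limit T x0 g)).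
  apply (is_lim_seq_le (fun n => Nat.iter n T f x0) (fun n => Nat.iter n T g x0));
    [| exact (iter_limit_correct _ _ f Hf) | exact (iter_limit_correct _ _ g Hg)].
  intro n. apply iter_monotone, Hfg.
Qed.

Lemma iter_limit_ge m M g : ell_bounded ell m M g -> m <= iter_limit T x0 g.
Proof.
  intro Hg. change (Rbar_le m (iter_limit T x0 g)).
  apply (is_lim_seq_le (fun _ => m) (fun n => Nat.iter n T g x0));
    [| apply is_lim_seq_const | exact (iter_limit_correct m M g Hg)].
  intro n. pose proof (iter_ell_bounded n m M g Hg x0) as Hx0.
  rewrite ell_x0 in Hx0. lra.
Qed.

End DoeblinContraction.

(* [u (S k) - q u k] gets multiplied by [/ q > 1] at each step, so it must
   vanish for [u] to stay bounded. *)
Lemma bounded_recurrence_geometric q K (u : nat -> R) :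
  0 < q < 1 -> (forall k, Rabs (u k) <= K) ->
  (forall k, u (S (S k)) = (q + / q) * u (S k) - u k) ->
  forall k, u k = u O * q ^ k.
Proof.
  intros Hq Hbound Hrec.
  set (d k := u (S k) - q * u k).
  assert (Hd : forall k, d k * q ^ k = d O).
  { induction k as [|k IH]; [simpl; ring|].
    rewrite <- IH. unfold d. rewrite Hrec. simpl. field. lra. }
  assert (Hd_le : forall k, Rabs (d O) <= 2 * K * q ^ k).
  { intro k. rewrite <- (Hd k), Rabs_mult, (Rabs_right (q ^ k))
      by (apply Rle_ge, pow_le; lra).
    apply Rmult_le_compat_r; [apply pow_le; lra|].
    pose proof (proj1 (Rabs_le_between _ _) (Hbound k)).
    pose proof (proj1 (Rabs_le_between _ _) (Hbound (S k))).
    apply Rabs_le_between. unfold d. nra. }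
  assert (Hd0 : d O = 0).
  { assert (Hlim : Rbar_le (Rabs (d O)) (2 * K * 0)).
    { apply (is_lim_seq_le (fun _ => Rabs (d O)) (fun k => 2 * K * q ^ k));
        [exact Hd_le | apply is_lim_seq_const |].
      apply (is_lim_seq_scal_l _ (2 * K) 0), is_lim_seq_geom.
      rewrite Rabs_right; lra. }
    simpl in Hlim. pose proof (Rabs_pos (d O)).
    apply Rabs_eq_0. lra. }
  induction k as [|k IH]; [simpl; ring|].
  assert (Hdk : d k = 0).
  { pose proof (pow_lt q k ltac:(lra)). rewrite Hd0 in Hd. specialize (Hd k). nra. }
  unfold d in Hdk. simpl. rewrite (Rmult_comm q), <- Rmult_assoc, <- IH. lra.
Qed.

Definition transfer (f : nat -> R) (h : nat) : R :=
  f (S h) + match h with O => 0 | S h' => f h' end + (if Nat.leb 2 h then f O else 0).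

Lemma transfer_linear a b f g h :
  transfer (fun y => a * f y + b * g y) h = a * transfer f h + b * transfer g h.
Proof. unfold transfer. destruct h as [|[|h]]; simpl; ring. Qed.

Lemma transfer_scale c f h : transfer (fun y => c * f y) h = c * transfer f h.
Proof. unfold transfer. destruct h as [|[|h]]; simpl; ring. Qed.

Lemma transfer_ge_succ f h : (forall x, 0 <= f x) -> f (S h) <= transfer f h.
Proof.
  intro Hf. unfold transfer. pose proof (Hf O).
  destruct h as [|[|h]]; simpl; [lra | lra | pose proof (Hf (S h)); lra].
Qed.

Lemma transfer_ge_0 f h : (forall x, 0 <= f x) -> f O <= transfer f (S h).
Proof.
  intro Hf. unfold transfer. pose proof (Hf O). pose proof (Hf (S (S h))).
  destruct h as [|h]; simpl; [lra | pose proof (Hf (S h)); lra].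
Qed.

Lemma transfer_nonneg f : (forall x, 0 <= f x) -> forall h, 0 <= transfer f h.
Proof. intros Hf h. pose proof (transfer_ge_succ f h Hf). pose proof (Hf (S h)). lra. Qed.

Lemma transfer2_ge_0 e h : (forall x, 0 <= e x) -> e O <= transfer (transfer e) h.
Proof.
  intro He. apply (Rle_trans _ (transfer e (S h))); [apply transfer_ge_0, He|].
  apply transfer_ge_succ, transfer_nonneg, He.
Qed.

Definition sumR {A : Type} (F : A -> R) (l : list A) : R :=
  fold_right (fun a s => F a + s) 0 l.

Lemma INR_length_filter {A : Type} (p : A -> bool) (l : list A) :
  INR (length (filter p l)) = sumR (fun a => if p a then 1 else 0) l.
Proof.
  induction l as [|a l IH]; [reflexivity|]. simpl.
  destruct (p a); simpl length; [rewrite S_INR|]; rewrite IH; ring.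
Qed.

Definition endpoint_weight (g : nat -> R) (h : nat) (w : list step) : R :=
  match run h w with Some j => g j | None => 0 end.

Definition weighted_count (n : nat) (g : nat -> R) (h : nat) : R :=
  sumR (endpoint_weight g h) (words n).

Lemma sumR_endpoint_weight_extend g h l :
  sumR (endpoint_weight g h) (flat_map (fun w => [Up :: w; Down :: w; Cat :: w]) l)
  = transfer (fun x => sumR (endpoint_weight g x) l) h.
Proof.
  unfold transfer. induction l as [|w l IH]; simpl.
  - destruct h as [|[|h]]; simpl; ring.
  - rewrite IH. unfold endpoint_weight at 1 2 3. simpl.
    destruct h as [|[|h]]; simpl; unfold endpoint_weight; simpl; ring.
Qed.

Lemma weighted_count_iter n g : weighted_count n g = Nat.iter n transfer g.
Proof.
  induction n as [|n IH]; apply functional_extensionality; intro h.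
  - unfold weighted_count, endpoint_weight. simpl. ring.
  - rewrite Nat.iter_succ, <- IH. apply sumR_endpoint_weight_extend.
Qed.

Definition dirac (k j : nat) : R := if Nat.eqb j k then 1 else 0.
Definition one (j : nat) : R := 1.

Lemma INR_meander_count n k : INR (meander_count n k) = Nat.iter n transfer (dirac k) O.
Proof.
  rewrite <- weighted_count_iter. unfold meander_count, weighted_count.
  rewrite INR_length_filter. f_equal. apply functional_extensionality. intro w.
  unfold endpoint_weight, dirac. destruct (run 0 w); reflexivity.
Qed.

Lemma INR_meander_total n : INR (meander_total n) = Nat.iter n transfer one O.
Proof.
  rewrite <- weighted_count_iter. unfold meander_total, weighted_count.
  rewrite INR_length_filter. f_equal. apply functional_extensionality. intro w.
  unfold endpoint_weight, one. destruct (run 0 w); reflexivity.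
Qed.

Lemma lam_cube : lam ^ 3 = 1 - lam.
Proof. pose proof lam_root. lra. Qed.

Definition beta : R := / lam ^ 2.

Lemma beta_pos : 0 < beta.
Proof. unfold beta. apply Rinv_0_lt_compat, pow_lt, lam_pos. Qed.

Lemma beta_eq : beta = lam + / lam.
Proof. pose proof lam_pos. pose proof lam_cube. unfold beta. field_simplify_eq; nra. Qed.

(* For [h >= 2] the eigen-equation [ell (h+1) + ell (h-1) + ell 0 = beta ell h]
   holds for [ell h = c (1 - lam^h)] iff [c = 1 / (beta - 2) = / lam^5]; the
   boundary equations at [h = 0, 1] then follow from [lam^3 = 1 - lam]. *)
Definition ell (h : nat) : R :=
  match h with O => 1 | S _ => / lam ^ 5 * (1 - lam ^ h) end.

Lemma transfer_ell h : transfer ell h = beta * ell h.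
Proof.
  pose proof lam_pos. pose proof lam_cube.
  unfold transfer, ell, beta. destruct h as [|[|h]]; simpl Nat.leb; cbv iota.
  - field_simplify_eq; [nra | lra].
  - field_simplify_eq; [nra | lra].
  - assert (Hlam7 : lam ^ 7 = 1 - 2 * lam ^ 2).
    { replace (lam ^ 7) with (lam * (lam ^ 3) ^ 2) by ring. rewrite lam_cube.
      replace (lam * (1 - lam) ^ 2) with (lam - 2 * lam ^ 2 + lam ^ 3) by ring.
      rewrite lam_cube. ring. }
    assert (Hshift : lam ^ S (S (S h)) + lam ^ S h = lam ^ h).
    { replace (lam ^ S (S (S h)) + lam ^ S h) with (lam ^ h * (lam ^ 3 + lam))
        by (simpl; ring).
      rewrite lam_cube. ring. }
    field_simplify_eq; [| lra].
    replace (lam ^ S (S h)) with (lam ^ 2 * lam ^ h) by (simpl; ring).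
    rewrite Hlam7, <- Hshift. ring.
Qed.

Lemma ell_ge_1 h : 1 <= ell h.
Proof.
  destruct h as [|h]; [simpl; lra|].
  change (ell (S h)) with (/ lam ^ 5 * (1 - lam ^ S h)).
  pose proof lam_pos. pose proof lam_lt_1. pose proof lam_cube.
  assert (Hpow : lam ^ h <= 1) by (rewrite <- (pow1 h); apply pow_incr; lra).
  assert (Hlam5 : lam ^ 5 <= 1 - lam).
  { replace (lam ^ 5) with (lam ^ 2 * lam ^ 3) by ring. rewrite lam_cube. nra. }
  assert (Hpow_S : lam ^ S h <= lam) by (simpl; nra).
  apply (Rmult_le_reg_l (lam ^ 5)); [apply pow_lt; lra|].
  rewrite <- Rmult_assoc, Rinv_r by (apply pow_nonzero; lra). lra.
Qed.

Lemma ell_le h : ell h <= / lam ^ 5.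
Proof.
  pose proof lam_pos as Hlam. pose proof lam_lt_1.
  assert (Hlam5 : 0 < lam ^ 5 <= 1).
  { split; [apply pow_lt; lra|]. rewrite <- (pow1 5). apply pow_incr; lra. }
  apply (Rmult_le_reg_l (lam ^ 5)); [lra|]. rewrite Rinv_r by lra.
  destruct h as [|h]; [simpl; lra|].
  change (ell (S h)) with (/ lam ^ 5 * (1 - lam ^ S h)).
  rewrite <- Rmult_assoc, Rinv_r by lra. pose proof (pow_lt lam (S h) Hlam). lra.
Qed.

Definition ntransfer (f : nat -> R) (h : nat) : R := / beta * transfer f h.

Lemma ntransfer_doeblin : doeblin_operator ntransfer ell O (lam ^ 9).
Proof.
  pose proof lam_pos as Hlam. pose proof lam_lt_1. pose proof beta_pos.
  split.
  - intros a b f g x. unfold ntransfer. rewrite transfer_linear. ring.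
  - intros f Hf x. unfold ntransfer.
    apply Rmult_le_pos; [left; apply Rinv_0_lt_compat; lra | apply transfer_nonneg, Hf].
  - apply functional_extensionality. intro h. unfold ntransfer.
    rewrite transfer_ell. field. lra.
  - reflexivity.
  - split; [apply pow_lt; lra|]. rewrite <- (pow1 9). apply pow_incr. lra.
  - intros e He h. unfold ntransfer. rewrite transfer_scale.
    pose proof (transfer2_ge_0 e h He) as He0. pose proof (He O).
    assert (Hell : lam ^ 9 * ell h <= lam ^ 4).
    { replace (lam ^ 4) with (lam ^ 9 * / lam ^ 5) by (field; lra).
      apply Rmult_le_compat_l; [left; apply pow_lt; lra | apply ell_le]. }
    assert (Hbeta2 : / beta * / beta = lam ^ 4) by (unfold beta; field; lra).
    rewrite <- Rmult_assoc, Hbeta2. nra.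
Qed.

Lemma iter_transfer n g h : Nat.iter n transfer g h = beta ^ n * Nat.iter n ntransfer g h.
Proof.
  pose proof beta_pos. revert h. induction n as [|n IH]; intro h; [simpl; ring|].
  rewrite !Nat.iter_succ, (functional_extensionality _ _ IH), transfer_scale.
  unfold ntransfer. simpl. field. lra.
Qed.

Lemma dirac_ell_bounded k : ell_bounded ell 0 1 (dirac k).
Proof. intro x. pose proof (ell_ge_1 x). unfold dirac. destruct (Nat.eqb x k); lra. Qed.

Lemma one_ell_bounded : ell_bounded ell (lam ^ 5) 1 one.
Proof.
  intro x. pose proof (ell_ge_1 x). pose proof (ell_le x). pose proof lam_pos.
  unfold one. split; [|lra].
  replace 1 with (lam ^ 5 * / lam ^ 5) by (field; lra).
  apply Rmult_le_compat_l; [left; apply pow_lt|]; lra.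
Qed.

Lemma ntransfer_dirac_S k :
  ntransfer (dirac (S k)) = fun x => / beta * dirac k x + / beta * dirac (S (S k)) x.
Proof.
  apply functional_extensionality. intro x.
  unfold ntransfer, transfer, dirac. destruct x as [|[|x]]; simpl; ring.
Qed.

Lemma ntransfer_dirac_0 :
  ntransfer (dirac O) = fun x => / beta * one x + (- / beta) * dirac O x.
Proof.
  apply functional_extensionality. intro x.
  unfold ntransfer, transfer, dirac, one. destruct x as [|[|x]]; simpl; ring.
Qed.

Lemma dirac_limit_S k :
  iter_limit ntransfer O (dirac (S k))
  = / beta * iter_limit ntransfer O (dirac k)
    + / beta * iter_limit ntransfer O (dirac (S (S k))).
Proof.
  rewrite <- (iter_limit_T ntransfer_doeblin _ _ _ (dirac_ell_bounded (S k))).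
  rewrite ntransfer_dirac_S.
  exact (iter_limit_linear ntransfer_doeblin _ _ _ _ _ _ _ _
           (dirac_ell_bounded k) (dirac_ell_bounded (S (S k)))).
Qed.

Lemma dirac_limit_0 :
  iter_limit ntransfer O (dirac O)
  = / beta * iter_limit ntransfer O one + (- / beta) * iter_limit ntransfer O (dirac O).
Proof.
  rewrite <- (iter_limit_T ntransfer_doeblin _ _ _ (dirac_ell_bounded O)) at 1.
  rewrite ntransfer_dirac_0.
  exact (iter_limit_linear ntransfer_doeblin _ _ _ _ _ _ _ _
           one_ell_bounded (dirac_ell_bounded O)).
Qed.

Lemma dirac_limit_geometric k :
  iter_limit ntransfer O (dirac k) = iter_limit ntransfer O (dirac O) * lam ^ k.
Proof.
  pose proof lam_pos as Hlam. pose proof lam_lt_1. pose proof beta_pos.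
  apply (bounded_recurrence_geometric lam (iter_limit ntransfer O one)
           (fun j => iter_limit ntransfer O (dirac j))); [lra | |].
  - intro j. apply Rabs_le_between. split.
    + pose proof (iter_limit_ge ntransfer_doeblin _ _ _ (dirac_ell_bounded j)).
      pose proof (iter_limit_ge ntransfer_doeblin _ _ _ one_ell_bounded).
      pose proof (pow_lt lam 5 Hlam). lra.
    + apply (iter_limit_le ntransfer_doeblin _ _ _ _ _ _ (dirac_ell_bounded j) one_ell_bounded).
      intro x. unfold dirac, one. destruct (Nat.eqb x j); lra.
  - intro j. rewrite <- beta_eq, (dirac_limit_S j). field. lra.
Qed.

Lemma dirac_limit_0_eq :
  iter_limit ntransfer O (dirac O) = (1 - lam) * iter_limit ntransfer O one.
Proof.
  pose proof lam_pos. pose proof lam_cube. pose proof beta_pos.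
  assert (Hinv : (1 - lam) * (1 + beta) = 1).
  { unfold beta. field_simplify_eq; [nra | lra]. }
  pose proof dirac_limit_0 as Hrec.
  set (c0 := iter_limit ntransfer O (dirac O)) in *.
  set (C := iter_limit ntransfer O one) in *.
  assert (Hc0 : c0 * (1 + beta) = C).
  { apply (Rmult_eq_reg_l (/ beta)); [| apply Rinv_neq_0_compat; lra].
    transitivity (/ beta * c0 + c0); [field; lra|]. lra. }
  rewrite <- Hc0. transitivity (c0 * ((1 - lam) * (1 + beta))); [rewrite Hinv|]; ring.
Qed.

Lemma prob_final_limit k : is_lim_seq (fun n => prob_final n k) ((1 - lam) * lam ^ k).
Proof.
  pose proof lam_pos as Hlam. pose proof beta_pos as Hbeta.
  assert (Hone : forall n, lam ^ 5 <= Nat.iter n ntransfer one O).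
  { intro n. pose proof (iter_ell_bounded ntransfer_doeblin n _ _ _ one_ell_bounded O) as Hn.
    simpl ell in Hn. lra. }
  assert (HC : lam ^ 5 <= iter_limit ntransfer O one)
    by exact (iter_limit_ge ntransfer_doeblin _ _ _ one_ell_bounded).
  pose proof (pow_lt lam 5 Hlam).
  apply (is_lim_seq_ext
           (fun n => Nat.iter n ntransfer (dirac k) O / Nat.iter n ntransfer one O)).
  - intro n. unfold prob_final.
    rewrite INR_meander_count, INR_meander_total, !iter_transfer.
    pose proof (pow_lt beta n Hbeta). pose proof (Hone n). field. lra.
  - replace ((1 - lam) * lam ^ k)
      with (iter_limit ntransfer O (dirac k) / iter_limit ntransfer O one).
    + apply is_lim_seq_div'; [| | lra].
      * exact (iter_limit_correct ntransfer_doeblin _ _ _ (dirac_ell_bounded k)).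
      * exact (iter_limit_correct ntransfer_doeblin _ _ _ one_ell_bounded).
    + rewrite dirac_limit_geometric, dirac_limit_0_eq. field. lra.
Qed.

Theorem corollary4p17 :
  exists lam : R,
    0 < lam /\ lam ^ 3 + lam - 1 = 0 /\
    (forall x : R, 0 < x -> x ^ 3 + x - 1 = 0 -> x = lam) /\
    (forall rho0 : R, 0 < rho0 -> rho0 ^ 3 + 2 * rho0 ^ 2 + rho0 - 1 = 0 ->
       lam = / v1 rho0) /\
    lam = / 6 * Rpower (108 + 12 * sqrt 93) (/ 3)
          - 2 * / Rpower (108 + 12 * sqrt 93) (/ 3) /\
    (forall k : nat,
       is_lim_seq (fun n : nat => prob_final n k / ((1 - lam) * lam ^ k)) 1).
Proof.
  exists lam.
  refine (conj lam_pos (conj lam_root (conj lam_root_unique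
            (conj lam_eq_inv_v1 (conj eq_refl _))))).
  intro k.
  pose proof lam_pos. pose proof lam_lt_1. pose proof (pow_lt lam k lam_pos).
  replace (Finite 1) with (Rbar_mult ((1 - lam) * lam ^ k) (/ ((1 - lam) * lam ^ k)))
    by (simpl; f_equal; field; split; lra).
  exact (is_lim_seq_scal_r _ _ _ (prob_final_limit k)).
Qed.
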